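(* Let $\mathcal A$ be a biflat Banach algebra and $I$ a closed two-sided ideal of $\mathcal A$ which is left essential. Suppose that $\mathcal A\hat\otimes_\pi\cdot$ respects $I$ into $\mathcal A\hat\otimes_\pi\mathcal A$ isomorphically. Then $H^1(\mathcal A,I^* )=\{0\}$.
   Context: $\mathcal A\hat\otimes_\pi\mathcal A$ is the projective tensor product, a Banach $\mathcal A$-bimodule via $a\cdot(b\otimes c)=ab\otimes c$, $(b\otimes c)\cdot a=b\otimes ca$; $\Delta:\mathcal A\hat\otimes_\pi\mathcal A\to\mathcal A$, $a\otimes b\mapsto ab$. $\mathcal A$ is biflat if $\Delta^*:\mathcal A^*\to(\mathcal A\hat\otimes_\pi\mathcal A)^*$ has a bounded left inverse which is an $\mathcal A$-bimodule homomorphism (duals carry $\langle x,a\cdot f\rangle=\langle x\cdot a,f\rangle$, $\langle x,f\cdot a\rangle=\langle a\cdot x,f\rangle$). $I$ is left essential if the linear span of $\{ai:a\in\mathcal A, i\in I\}$ is dense in $I$. ''$\mathcal A\hat\otimes_\pi\cdot$ respects $I$ into $\mathcal A\hat\otimes_\pi\mathcal A$ isomorphically'' means there exists $\lambda\ge1$ such that $\pi(z;\mathcal A,I)\le\lambda\,\pi(z;\mathcal A,\mathcal A)$ for every $z\in\mathcal A\otimes I$, where $\pi(z;E,F)$ denotes the projective tensor norm of $z$ computed in $E\hat\otimes_\pi F$. $H^1(\mathcal A,I^* )=\{0\}$ means every derivation $D:\mathcal A\to I^*$ (continuous linear, $D(ab)=a\cdot D(b)+D(a)\cdot b$) satisfies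 $D(a)=a\cdot f-f\cdot a$ for some $f\in I^*$. *)

From mathcomp Require Import all_boot all_algebra.
From mathcomp Require Import all_classical all_reals all_analysis.
From mathcomp Require Export complex.
Import numFieldNormedType.Exports.
Import GRing.Theory Num.Theory.

Set Implicit Arguments.
Unset Strict Implicit.
Unset Printing Implicit Defensive.

Local Open Scope ring_scope.
Local Open Scope classical_set_scope.

Section BanachAlgebraDefs.
Variables (K : numFieldType) (V : normedModType K).

(* Completeness of V is imposed by taking V : completeNormedModType in the
   theorem. *)
Record banach_algebra (mul : V -> V -> V) : Prop := BanachAlgebra {
  ba_mulA : forall a b c, mul a (mul b c) = mul (mul a b) c;
  ba_mulDl : forall a b c, mul (a + b) c = mul a c + mul b c;
  ba_mulDr : forall a b c, mul a (b + c) = mul a b + mul a c;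
  ba_mulZl : forall (k : K) a b, mul (k *: a) b = k *: mul a b;
  ba_mulZr : forall (k : K) a b, mul a (k *: b) = k *: mul a b;
  ba_norm_mul : forall a b, `|mul a b| <= `|a| * `|b| }.

Record closed_ideal (mul : V -> V -> V) (I : set V) : Prop := ClosedIdeal {
  ci_0 : I 0;
  ci_D : forall x y, I x -> I y -> I (x + y);
  ci_Z : forall (k : K) x, I x -> I (k *: x);
  ci_closed : closed I;
  ci_mull : forall a i, I i -> I (mul a i);
  ci_mulr : forall a i, I i -> I (mul i a) }.

Definition span_products (mul : V -> V -> V) (I : set V) : set V :=
  [set x | exists n (k : 'I_n -> K) (a : 'I_n -> V) (i : 'I_n -> V),
     (forall j, I (i j)) /\ x = \sum_(j < n) k j *: mul (a j) (i j)].

Definition left_essential (mul : V -> V -> V) (I : set V) : Prop :=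
  I `<=` closure (span_products mul I).

(* A formal finite sum  \sum_j tleft j (x) tright j. *)
Local Unset Implicit Arguments.
Record tensor := Tensor {
  tsize : nat;
  tleft : 'I_tsize -> V;
  tright : 'I_tsize -> V }.
Local Set Implicit Arguments.

Definition in_tensor (P Q : set V) (t : tensor) : Prop :=
  forall j, P (tleft t j) /\ Q (tright t j).

Definition bilinear_on (Q : set V) (B : V -> V -> K) : Prop :=
  (forall (k : K) x y z, Q z -> B (k *: x + y) z = k * B x z + B y z) /\
  (forall (k : K) x y z, Q y -> Q z -> B x (k *: y + z) = k * B x y + B x z).

Definition teval (B : V -> V -> K) (t : tensor) : K :=
  \sum_(j < tsize t) B (tleft t j) (tright t j).

(* Equality of the two represented tensors in the algebraic tensor product
   V (x) Q, via its universal property: all bilinear forms on V x Q agree. *)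
Definition tensor_eq (Q : set V) (t u : tensor) : Prop :=
  forall B, bilinear_on Q B -> teval B t = teval B u.

Definition tcost (t : tensor) : K :=
  \sum_(j < tsize t) `|tleft t j| * `|tright t j|.

(* "A (x)_pi . respects I into A (x)_pi A isomorphically": there is
   lambda >= 1 with  pi(z; A, I) <= lambda * pi(z; A, A)  for all z in A (x) I,
   where pi(z; A, Q) = inf { tcost u | u in A x Q represents z in A (x) Q }.
   The inequality between infima is written out: for every representation t
   of z in A (x) A and every eps > 0 there is a representation u of z in
   A (x) I of cost <= lambda * cost(t) + eps. *)
Definition respects_iso (I : set V) : Prop :=
  exists lambda : K, 1 <= lambda /\
    forall z, in_tensor setT I z ->
    forall t, in_tensor setT setT t -> tensor_eq setT t z ->
    forall eps : K, 0 < eps ->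
    exists u, [/\ in_tensor setT I u, tensor_eq I u z &
                  tcost u <= lambda * tcost t + eps].

Definition bounded_functional (f : V -> K) : Prop :=
  (forall (k : K) x y, f (k *: x + y) = k * f x + f y) /\
  exists M : K, forall x, `|f x| <= M * `|x|.

(* bounded bilinear forms on V x V: these are the elements of
   (A (x)_pi A)^*  (standard isometric identification); the dual norm is
   the smallest M with |B b c| <= M |b| |c|. *)
Definition bounded_bilinear (B : V -> V -> K) : Prop :=
  bilinear_on setT B /\ exists M : K, forall b c, `|B b c| <= M * `|b| * `|c|.

(* Biflatness: Delta^* : A^* -> (A (x)_pi A)^*, f |-> ((b,c) |-> f (b c)),
   has a bounded left inverse rho which is an A-bimodule homomorphism.
   Module actions: (a.F)(b,c) = F(b, c a), (F.a)(b,c) = F(a b, c),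
   (a.f)(x) = f(x a), (f.a)(x) = f(a x). *)
Definition biflat (mul : V -> V -> V) : Prop :=
  exists rho : (V -> V -> K) -> (V -> K),
    [/\ forall B, bounded_bilinear B -> bounded_functional (rho B),
        forall (k : K) B1 B2, bounded_bilinear B1 -> bounded_bilinear B2 ->
          rho (fun b c => k * B1 b c + B2 b c) = (fun x => k * rho B1 x + rho B2 x),
        exists C : K, forall B (M : K), bounded_bilinear B ->
          (forall b c, `|B b c| <= M * `|b| * `|c|) ->
          forall x, `|rho B x| <= C * M * `|x|,
        forall f, bounded_functional f -> rho (fun b c => f (mul b c)) = f &
        forall a B, bounded_bilinear B ->
          rho (fun b c => B b (mul c a)) = (fun x => rho B (mul x a)) /\
          rho (fun b c => B (mul a b) c) = (fun x => rho B (mul a x))].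

(* An element of I^* is represented by a function V -> K, only its values on
   I matter.  D : A -> I^* is encoded as D a i = <i, D(a)>.
   Module actions on I^*: <i, a.f> = f(i a), <i, f.a> = f(a i). *)
Definition dual_on (I : set V) (f : V -> K) : Prop :=
  (forall (k : K) x y, I x -> I y -> f (k *: x + y) = k * f x + f y) /\
  exists M : K, forall x, I x -> `|f x| <= M * `|x|.

Definition derivation_into_dual (mul : V -> V -> V) (I : set V)
    (D : V -> V -> K) : Prop :=
  [/\ forall a (k : K) x y, I x -> I y -> D a (k *: x + y) = k * D a x + D a y,
      forall (k : K) a b x, I x -> D (k *: a + b) x = k * D a x + D b x,
      exists C : K, forall a x, I x -> `|D a x| <= C * `|a| * `|x| &
      forall a b x, I x -> D (mul a b) x = D b (mul x a) + D a (mul b x)].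

(* H^1(A, I^* ) = {0}: every continuous derivation is inner. *)
Definition H1_dual_trivial (mul : V -> V -> V) (I : set V) : Prop :=
  forall D, derivation_into_dual mul I D ->
    exists f, dual_on I f /\
      forall a x, I x -> D a x = f (mul x a) - f (mul a x).

End BanachAlgebraDefs.

(* A derivation D : A -> I^* is a bounded bilinear form on A x I, that is a
   bounded functional on A (x) I for pi(.; A, I).  Since this norm is at most
   lambda pi(.; A, A) on A (x) I, the real Hahn-Banach theorem (applied to
   real parts, then complexified) extends D to a bounded bilinear form P on
   A x A.  Let rho be the bimodule left inverse of Delta^* and f := - rho P.
   For fixed a, x |-> D a x - (f (x a) - f (a x)) = D a x - rho (P.a - a.P) x
   vanishes on the products y j with j in I: there P.a - a.P restricts, by
   the derivation identity, to Delta^* of w |-> D a (w j), and rho is a left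
   inverse of Delta^*.  Being bounded on I, it vanishes on the closure of
   these products, which is I by left essentiality. *)

From Pilot Require Import Defs.
From mathcomp Require Import all_boot all_order all_algebra.
From mathcomp Require Import all_classical all_reals all_analysis.
Import Order.TTheory GRing.Theory Num.Theory numFieldNormedType.Exports.
(* Imported after Num.Theory so that Re and Im are the projections of R[i]. *)
From mathcomp Require Import complex lra.

Set Implicit Arguments.
Unset Strict Implicit.
Unset Printing Implicit Defensive.

Local Open Scope ring_scope.
Local Open Scope classical_set_scope.

Section HahnBanach.
Variables (R : realType) (X : lmodType R) (T : set X) (p : X -> R).
Hypotheses (TD : forall x y, T x -> T y -> T (x + y))
  (TZ : forall (r : R) x, T x -> T (r *: x))
  (pD : forall x y, T x -> T y -> p (x + y) <= p x + p y)
  (pZ : forall (r : R) x, 0 < r -> T x -> p (r *: x) = r * p x).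

Definition dominated_linear_graph (H : set (X * R)) : Prop :=
  [/\ forall x y y', H (x, y) -> H (x, y') -> y = y',
      forall x y x' y', H (x, y) -> H (x', y') -> H (x + x', y + y'),
      forall (r : R) x y, H (x, y) -> H (r *: x, r * y) &
      forall x y, H (x, y) -> T x /\ y <= p x].

Section OneStepExtension.
Variables (H : set (X * R)) (x0 : X).
Hypotheses (Hgraph : dominated_linear_graph H) (H00 : H (0, 0)) (Tx0 : T x0)
  (Hx0 : ~ exists y, H (x0, y)).

Definition adjoin (c : R) : set (X * R) :=
  [set z | exists n y (r : R), H (n, y) /\ z = (n + r *: x0, y + r * c)].

Lemma graph_gap n y m h : H (n, y) -> H (m, h) ->
  y - p (n - x0) <= p (m + x0) - h.
Proof.
have [_ HD _ Hp] := Hgraph => Hny Hmh.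
have [Tnm le1] := Hp _ _ (HD _ _ _ _ Hny Hmh).
have [Tn _] := Hp _ _ Hny; have [Tm _] := Hp _ _ Hmh.
have TNx0 : T (- x0) by rewrite -scaleN1r; apply: TZ.
have le2 : p (n + m) <= p (n - x0) + p (m + x0).
  have -> : n + m = (n - x0) + (m + x0) by rewrite addrACA addNr addr0.
  by apply: pD; apply: TD.
have := le_trans le1 le2; lra.
Qed.

Lemma separating_constant : exists c,
  (forall n y, H (n, y) -> y - p (n - x0) <= c) /\
  (forall m h, H (m, h) -> c <= p (m + x0) - h).
Proof.
set S := [set z | exists n y, H (n, y) /\ z = y - p (n - x0)].
have ubS m h : H (m, h) -> ubound S (p (m + x0) - h).
  by move=> Hmh _ [n [y [Hny ->]]]; apply: graph_gap.
have S0 : S !=set0 by exists (0 - p (0 - x0)), 0, 0.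
exists (sup S); split => [n y Hny|m h Hmh].
  by apply: sup_upper_bound; [split=> //; exists (p (0 + x0) - 0); apply: ubS|exists n, y].
exact: ge_sup (ubS _ _ Hmh).
Qed.

Lemma adjoin_sub c : H `<=` adjoin c.
Proof. by move=> [n y] Hny; exists n, y, 0; rewrite scale0r mul0r !addr0. Qed.

Lemma adjoin_x0 c : adjoin c (x0, c).
Proof. by exists 0, 0, 1; rewrite scale1r mul1r !add0r. Qed.

Lemma adjoin_functional c x y y' : adjoin c (x, y) -> adjoin c (x, y') -> y = y'.
Proof.
have [Hf HD HZ _] := Hgraph.
move=> [n [z [r [Hn [-> ->]]]]] [n' [z' [r' [Hn' [e ->]]]]].
have [Err'|rr'] := eqVneq r r'.
  by subst r'; move/addIr: e => e; rewrite -e in Hn'; rewrite (Hf _ _ _ Hn Hn').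
have x0E : x0 = (r - r')^-1 *: (n' - n).
  have <- : (n + r *: x0) - (n + r' *: x0) = n' - n.
    by rewrite e opprD addrACA subrr addr0.
  by rewrite opprD addrACA subrr add0r -scalerBl scalerA mulVf ?scale1r ?subr_eq0.
have HNn : H (- n, - z) by move: (HZ (-1) _ _ Hn); rewrite scaleN1r mulN1r.
by exfalso; apply: Hx0; exists ((r - r')^-1 * (z' - z)); rewrite x0E; apply/HZ/HD.
Qed.

Lemma adjoin_dominated c :
  (forall n y, H (n, y) -> y - p (n - x0) <= c) ->
  (forall m h, H (m, h) -> c <= p (m + x0) - h) ->
  forall x y, adjoin c (x, y) -> T x /\ y <= p x.
Proof.
have [_ _ HZ Hp] := Hgraph => cge cle x y [n [z [r [Hn [-> ->]]]]].
have [Tn lez] := Hp _ _ Hn.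
split; first by apply: TD => //; apply: TZ.
have [r0|r0|->] := ltgtP r 0; last by rewrite scale0r mul0r !addr0.
- set s := - r; have s0 : 0 < s by rewrite oppr_gt0.
  have -> : n + r *: x0 = s *: (s^-1 *: n - x0).
    by rewrite scalerDr scalerA mulfV ?gt_eqF // scale1r scalerN scaleNr opprK.
  rewrite pZ //; last by apply: TD; [apply: TZ|rewrite -scaleN1r; apply: TZ].
  have := cge _ _ (HZ s^-1 _ _ Hn); rewrite -(ler_pM2l s0) mulrBr mulrA.
  by rewrite mulfV ?gt_eqF // mul1r -[r]opprK -/s mulNr; lra.
- have -> : n + r *: x0 = r *: (r^-1 *: n + x0).
    by rewrite scalerDr scalerA mulfV ?gt_eqF // scale1r.
  rewrite pZ //; last by apply: TD => //; apply: TZ.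
  have := cle _ _ (HZ r^-1 _ _ Hn); rewrite -(ler_pM2l r0) mulrBr mulrA.
  by rewrite mulfV ?gt_eqF // mul1r; lra.
Qed.

Lemma adjoin_graph : exists c, dominated_linear_graph (adjoin c) /\ adjoin c (x0, c).
Proof.
have [_ HD HZ _] := Hgraph.
have [c [cge cle]] := separating_constant.
exists c; split; last exact: adjoin_x0.
split; [exact: adjoin_functional| | |exact: adjoin_dominated].
- move=> x y x' y' [n [z [r [Hn [-> ->]]]]] [n' [z' [r' [Hn' [-> ->]]]]].
  exists (n + n'), (z + z'), (r + r'); split; first exact: HD.
  by rewrite scalerDl mulrDl !addrA (addrAC n) (addrAC z).
- move=> s x y [n [z [r [Hn [-> ->]]]]].
  exists (s *: n), (s * z), (s * r); split; first exact: HZ.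
  by rewrite scalerDr mulrDr scalerA mulrA.
Qed.

End OneStepExtension.

Variable G : set (X * R).
Hypotheses (G00 : G (0, 0)) (Ggraph : dominated_linear_graph G).

Let chain_union_graph (F : set (set (X * R))) :
  F `<=` (fun Y => dominated_linear_graph (Y `|` G)) -> total_on F subset ->
  dominated_linear_graph ((\bigcup_(Y in F) Y) `|` G).
Proof.
move=> FP Ftot; set U := _ `|` G.
have common a b : U a -> U b -> exists H,
    [/\ dominated_linear_graph H, H a, H b & H `<=` U].
  have sub Y : F Y -> Y `|` G `<=` U by move=> FY z [Yz|Gz]; [left; exists Y|right].
  move=> [[Y1 FY1 Y1a]|Ga] [[Y2 FY2 Y2b]|Gb].
  - have [s12|s21] := Ftot _ _ FY1 FY2.
    + by exists (Y2 `|` G); split; [exact: FP|left; apply: s12|left|exact: sub].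
    + by exists (Y1 `|` G); split; [exact: FP|left|left; apply: s21|exact: sub].
  - by exists (Y1 `|` G); split; [exact: FP|left|right|exact: sub].
  - by exists (Y2 `|` G); split; [exact: FP|right|left|exact: sub].
  - by exists G; split => // z Gz; right.
split.
- by move=> x y y' h1 h2; have [H [[Hf _ _ _] Ha Hb _]] := common _ _ h1 h2; apply: Hf Ha Hb.
- move=> x y x' y' h1 h2; have [H [[_ HD _ _] Ha Hb HU]] := common _ _ h1 h2.
  exact/HU/HD.
- by move=> r x y h; have [H [[_ _ HZ _] Ha _ HU]] := common _ _ h h; apply/HU/HZ.
- by move=> x y h; have [H [[_ _ _ Hp] Ha _ _]] := common _ _ h h; apply: Hp.
Qed.

Lemma hahn_banach_graph : exists U : X -> R,
  [/\ forall x y, T x -> T y -> U (x + y) = U x + U y,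
      forall (r : R) x, T x -> U (r *: x) = r * U x,
      forall x, T x -> U x <= p x &
      forall x y, G (x, y) -> U x = y].
Proof.
have [M [Mgraph Mmax]] := Zorn_bigcup chain_union_graph.
set H := M `|` G.
have Hdom x : T x -> exists y, H (x, y).
  move=> Tx; apply: contrapT => nHx.
  have [c [cgraph Hc]] := adjoin_graph Mgraph (or_intror G00) Tx nHx.
  apply: (Mmax (adjoin H x c)).
    split; first by move=> z Mz; apply: adjoin_sub; left.
    by move=> sub; apply: nHx; exists c; left; apply: sub.
  by rewrite setUidl // => z Gz; apply: adjoin_sub; right.
have [Hf HD HZ Hp] := Mgraph.
pose U x := xget 0 [set y | H (x, y)].
have HU x : T x -> H (x, U x) by move=> Tx; apply: (xgetPex 0 (Hdom x Tx)).
exists U; split.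
- by move=> x y Tx Ty; apply: (Hf (x + y)); [apply: HU; apply: TD|apply: HD; apply: HU].
- by move=> r x Tx; apply: (Hf (r *: x)); [apply: HU; apply: TZ|apply: HZ; apply: HU].
- by move=> x Tx; have [] := Hp _ _ (HU _ Tx).
- move=> x y Gxy; have [_ _ _ /(_ x y Gxy) [Tx _]] := Ggraph.
  by apply: (Hf x); [apply: HU|right].
Qed.

End HahnBanach.

Lemma ler_norm_absM (K : numDomainType) (u M v : K) :
  0 <= v -> `|u| <= M * v -> `|u| <= `|M| * v.
Proof.
move=> v0 h; have h0 : 0 <= M * v := le_trans (normr_ge0 _) h.
by rewrite -(ger0_norm v0) -normrM (ger0_norm h0).
Qed.

Section FormalTensors.
Variables (K : numFieldType) (V : normedModType K).
Local Notation tensor := (tensor K V).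
Local Notation tsz t := (Defs.tsize K V t).
Local Notation tl t := (Defs.tleft K V t).
Local Notation tr t := (Defs.tright K V t).
Implicit Types (t s : tensor) (B : V -> V -> K) (Q : set V).

Definition tcat t s : tensor :=
  Tensor K V (tsz t + tsz s)
    (fun j => match fintype.split j with inl a => tl t a | inr b => tl s b end)
    (fun j => match fintype.split j with inl a => tr t a | inr b => tr s b end).

Definition tscale (k : K) t : tensor := Tensor K V (tsz t) (fun j => k *: tl t j) (tr t).

Definition tsingle (b c : V) : tensor := Tensor K V 1 (fun _ => b) (fun _ => c).

Definition tempty : tensor := Tensor K V 0 (fun _ => 0) (fun _ => 0).

Lemma teval_cat B t s : teval B (tcat t s) = teval B t + teval B s.
Proof.
rewrite /teval /= big_split_ord /=; congr (_ + _); apply: eq_bigr => j _.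
  by rewrite (unsplitK (inl _ j)).
by rewrite (unsplitK (inr _ j)).
Qed.

Lemma tcost_cat t s : tcost (tcat t s) = tcost t + tcost s.
Proof.
rewrite /tcost /= big_split_ord /=; congr (_ + _); apply: eq_bigr => j _.
  by rewrite (unsplitK (inl _ j)).
by rewrite (unsplitK (inr _ j)).
Qed.

Lemma in_tensor_cat P Q t s : in_tensor P Q t -> in_tensor P Q s ->
  in_tensor P Q (tcat t s).
Proof. by move=> ht hs j /=; case: (fintype.split j) => a; [apply: ht|apply: hs]. Qed.

Lemma bilinear_onZ Q (k : K) B : bilinear_on Q B ->
  bilinear_on Q (fun b c => k * B b c).
Proof.
move=> [h1 h2]; split => [k' x y z Qz|k' x y z Qy Qz].
  by rewrite h1 // mulrDr mulrCA.
by rewrite h2 // mulrDr mulrCA.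
Qed.

Lemma teval_mull (k : K) B t : teval (fun b c => k * B b c) t = k * teval B t.
Proof. by rewrite /teval mulr_sumr. Qed.

Lemma teval_scale Q B k t : bilinear_on Q B -> in_tensor setT Q t ->
  teval B (tscale k t) = k * teval B t.
Proof.
move=> [hB _] ht; rewrite /teval /= mulr_sumr; apply: eq_bigr => j _.
have [_ Qj] := ht j.
have B0 : B 0 (tr t j) = 0.
  have := hB 1 0 0 _ Qj; rewrite scale1r addr0 mul1r => h.
  by apply: (addrI (B 0 (tr t j))); rewrite addr0 -h.
by have := hB k (tl t j) 0 _ Qj; rewrite addr0 B0 addr0.
Qed.

Lemma tcost_scale k t : tcost (tscale k t) = `|k| * tcost t.
Proof. by rewrite /tcost /= mulr_sumr; apply: eq_bigr => j _; rewrite normrZ mulrA. Qed.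

Lemma in_tensor_scale Q k t : in_tensor setT Q t -> in_tensor setT Q (tscale k t).
Proof. by move=> ht j; have [_ ?] := ht j. Qed.

Lemma teval_single B b c : teval B (tsingle b c) = B b c.
Proof. by rewrite /teval big_ord1. Qed.

Lemma tcost_single b c : tcost (tsingle b c) = `|b| * `|c|.
Proof. by rewrite /tcost big_ord1. Qed.

Lemma teval_empty B : teval B tempty = 0.
Proof. by rewrite /teval big_ord0. Qed.

Lemma tcost_empty : tcost tempty = 0.
Proof. by rewrite /tcost big_ord0. Qed.

Lemma in_tensorT t : in_tensor setT setT t.
Proof. by []. Qed.

Lemma in_tensor_empty P Q : in_tensor P Q tempty.
Proof. by case. Qed.

Lemma tcost_ge0 t : 0 <= tcost t.
Proof. by apply: sumr_ge0 => j _; apply: mulr_ge0. Qed.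

End FormalTensors.

Section ComplexParts.
Variable R : realType.
Local Notation C := R[i].
Local Open Scope complex_scope.
Implicit Types x y : C.

Lemma complex_ext x y : Re x = Re y -> Im x = Im y -> x = y.
Proof. by case: x; case: y => a b c d /= -> ->. Qed.

Lemma ReD x y : Re (x + y) = Re x + Re y. Proof. by case: x; case: y. Qed.
Lemma ReN x : Re (- x) = - Re x. Proof. by case: x. Qed.
Lemma ImN x : Im (- x) = - Im x. Proof. by case: x. Qed.
Lemma ReMc x y : Re (x * y) = Re x * Re y - Im x * Im y.
Proof. by case: x; case: y. Qed.
Lemma ImMc x y : Im (x * y) = Re x * Im y + Im x * Re y.
Proof. by case: x => a b; case: y => c d /=; rewrite addrC. Qed.
Lemma ReMr (r : R) x : Re (r%:C * x) = r * Re x.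
Proof. by rewrite ReMc /= mul0r subr0. Qed.

Lemma lec_Re x y : x <= y -> Re x <= Re y.
Proof. by rewrite lecE => /andP[]. Qed.

Lemma ge0_complex_real x : 0 <= x -> x = (Re x)%:C.
Proof. by rewrite lecE => /andP[/eqP h _]; apply: complex_ext. Qed.

Lemma normc_real x : `|x| = (Re `|x|)%:C.
Proof. exact: ge0_complex_real. Qed.

Lemma Re_normc_ge0 x : 0 <= Re `|x|.
Proof. exact: lec_Re (normr_ge0 x). Qed.

Lemma Re_le_normc x : Re x <= Re `|x|.
Proof. by have := lec_Re (normc_ge_Re x); apply: le_trans (ler_norm _). Qed.

Lemma Re_normc_le (u v : R) : Re `|u +i* v| <= `|u| + `|v|.
Proof.
rewrite normc_def /=.
have h : u ^+ 2 + v ^+ 2 <= (`|u| + `|v|) ^+ 2.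
  rewrite sqrrD (real_normK (num_real u)) (real_normK (num_real v)).
  by rewrite -addrA lerD2l lerDr mulrn_wge0 // mulr_ge0.
by have := ler_wsqrtr h; rewrite sqrtr_sqr ger0_norm // addr_ge0.
Qed.

Lemma Re_normc_i : Re `|'i : C| = 1.
Proof. by rewrite normc_def /= expr0n expr1n add0r sqrtr1. Qed.

End ComplexParts.

Section Extension.
Variables (R : realType) (A : normedModType R[i]) (I : set A).
Local Notation C := R[i].
Local Notation tensor := (tensor C A).
Local Open Scope complex_scope.
Implicit Types (t s u z : tensor).
Variable lam : C.
Hypotheses (lam1 : 1 <= lam)
  (hlam : forall z, in_tensor setT I z ->
    forall t, in_tensor setT setT t -> tensor_eq setT t z ->
    forall eps : C, 0 < eps ->
    exists u, [/\ in_tensor setT I u, tensor_eq I u z &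
                  tcost u <= lam * tcost t + eps]).
Variables (D : A -> A -> C) (CD : C).
Hypotheses (DI : bilinear_on I D)
  (Dbound : forall a x, I x -> `|D a x| <= CD * `|a| * `|x|).

Definition bilform := {B : A -> A -> C | bilinear_on setT B}.

(* The algebraic tensor product A (x) A is realised inside the real vector
   space bilform -> R; taking real parts loses nothing since B may be
   replaced by 'i * B (see tembed_tensor_eq). *)
Definition tembed (t : tensor) : bilform -> R := fun B => Re (teval (sval B) t).

Definition ibilform (B : bilform) : bilform :=
  exist _ (fun b c => 'i * sval B b c) (bilinear_onZ 'i (svalP B)).

Lemma tembed_tensor_eq t s : tembed t = tembed s -> tensor_eq setT t s.
Proof.
move=> e B hB.
have e1 := congr1 (fun f => f (exist _ B hB)) e.
have e2 := congr1 (fun f => f (ibilform (exist _ B hB))) e.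
move: e1 e2; rewrite /tembed /= !teval_mull !ReMc /= !mul0r !mul1r !sub0r => e1 e2.
by apply: complex_ext => //; apply: oppr_inj.
Qed.

Lemma tensor_eq_tembed t s : tensor_eq setT t s -> tembed t = tembed s.
Proof. by move=> e; apply: funext => B; rewrite /tembed (e _ (svalP B)). Qed.

Lemma teval_bilform_scale (B : bilform) k t :
  teval (sval B) (tscale k t) = k * teval (sval B) t.
Proof. by rewrite (teval_scale k (svalP B)). Qed.

Lemma tembed_cat t s : tembed (tcat t s) = tembed t + tembed s.
Proof. by apply: funext => B; rewrite /tembed teval_cat ReD. Qed.

Lemma tembed_scale k t :
  tembed (tscale k t) = Re k *: tembed t + Im k *: tembed (tscale 'i t).
Proof.
apply: funext => B.
change (tembed (tscale k t) B = Re k * tembed t B + Im k * tembed (tscale 'i t) B).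
by rewrite /tembed !teval_bilform_scale !ReMc /= mul0r mul1r sub0r; lra.
Qed.

Lemma tembed_scale_real (r : R) t : tembed (tscale r%:C t) = r *: tembed t.
Proof. by rewrite tembed_scale /= scale0r addr0. Qed.

Lemma tembed_scaleM k k' t :
  tembed (tscale k (tscale k' t)) = tembed (tscale (k * k') t).
Proof. by apply: funext => B; rewrite /tembed !teval_bilform_scale mulrA. Qed.

Lemma tembed_scale_cat k t s :
  tembed (tscale k (tcat t s)) = tembed (tscale k t) + tembed (tscale k s).
Proof.
rewrite -tembed_cat; apply: tensor_eq_tembed => B hB.
by rewrite teval_cat !(teval_scale _ hB) // teval_cat mulrDr.
Qed.

Lemma tembed_empty : tembed (tempty A) = 0.
Proof. by apply: funext => B; rewrite /tembed teval_empty. Qed.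

Definition tspace := [set x | exists t, tembed t = x].

Lemma tembed_tspace t : tspace (tembed t). Proof. by exists t. Qed.

Lemma tspaceD x y : tspace x -> tspace y -> tspace (x + y).
Proof. by move=> [t <-] [s <-]; exists (tcat t s); rewrite tembed_cat. Qed.

Lemma tspaceZ (r : R) x : tspace x -> tspace (r *: x).
Proof. by move=> [t <-]; exists (tscale r%:C t); rewrite tembed_scale_real. Qed.

Definition rcost t := Re (tcost t).

Lemma rcost_real t : tcost t = (rcost t)%:C.
Proof. exact: ge0_complex_real (tcost_ge0 t). Qed.

Lemma rcost_ge0 t : 0 <= rcost t.
Proof. exact: lec_Re (tcost_ge0 t). Qed.

Lemma rcost_cat t s : rcost (tcat t s) = rcost t + rcost s.
Proof. by rewrite /rcost tcost_cat ReD. Qed.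

Lemma rcost_scale k t : rcost (tscale k t) = Re `|k| * rcost t.
Proof. by rewrite /rcost tcost_scale {1}normc_real ReMr. Qed.

Let l := Re lam.
Let lam_real : lam = l%:C. Proof. exact/ge0_complex_real/(le_trans _ lam1). Qed.
Let l_ge1 : 1 <= l. Proof. exact: lec_Re lam1. Qed.

Let cn := Re `|CD|.
Let cn_ge0 : 0 <= cn. Proof. exact: Re_normc_ge0. Qed.

Let Dbound_real a x : I x -> `|D a x| <= cn%:C * `|a| * `|x|.
Proof.
move=> Ix; rewrite /cn -normc_real -mulrA; apply: ler_norm_absM.
  exact: mulr_ge0.
by rewrite mulrA; apply: Dbound.
Qed.

Lemma Re_tevalD_le u : in_tensor setT I u -> Re (teval D u) <= cn * rcost u.
Proof.
move=> hu; have h : `|teval D u| <= cn%:C * tcost u.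
  rewrite /teval /tcost mulr_sumr; apply: le_trans (ler_norm_sum _ _ _) _.
  by apply: ler_sum => j _; rewrite mulrA; apply: Dbound_real; case: (hu j).
by apply: le_trans (Re_le_normc _) _; have := lec_Re h; rewrite ReMr.
Qed.

Lemma Re_tevalD_le_proj z t : in_tensor setT I z -> tensor_eq setT t z ->
  Re (teval D z) <= cn * l * rcost t.
Proof.
move=> hz hzt; apply/ler_addgt0Pr => e e0.
have cn1 : 0 < cn + 1 by apply: ltr_wpDl cn_ge0 ltr01.
set e1 := e / (cn + 1).
have e10 : 0 < e1 by apply: divr_gt0.
have e1C : 0 < e1%:C by rewrite ltcR.
have [u [hu hue hc]] := hlam hz (@in_tensorT _ _ t) hzt e1C.
rewrite -(hue D DI); apply: le_trans (Re_tevalD_le hu) _.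
have hc' : rcost u <= l * rcost t + e1.
  by move: (lec_Re hc); rewrite lam_real rcost_real ReD ReMr.
have : cn * rcost u <= cn * (l * rcost t + e1) by apply: ler_wpM2l.
have : cn * e1 <= e by rewrite /e1 mulrA ler_pdivrMr //; nra.
rewrite mulrDr mulrA; lra.
Qed.

Definition rep_costs x := [set e | exists t, tembed t = x /\ e = rcost t].

Definition pnorm x := inf (rep_costs x).

Lemma pnorm_le t : pnorm (tembed t) <= rcost t.
Proof. by apply: ge_inf; [exists 0 => _ [s [_ ->]]; apply: rcost_ge0|exists t]. Qed.

Lemma rep_costs_inf x : tspace x -> has_inf (rep_costs x).
Proof.
move=> [t <-]; split; first by exists (rcost t), t.
by exists 0 => _ [s [_ ->]]; apply: rcost_ge0.
Qed.

Lemma pnormD x y : tspace x -> tspace y -> pnorm (x + y) <= pnorm x + pnorm y.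
Proof.
move=> Tx Ty; apply/ler_addgt0Pr => e e0.
have e2 : 0 < e / 2 by apply: divr_gt0.
have [_ [t [tx ->]] lt1] := inf_adherent e2 (rep_costs_inf Tx).
have [_ [s [sy ->]] lt2] := inf_adherent e2 (rep_costs_inf Ty).
have := pnorm_le (tcat t s); rewrite tembed_cat tx sy rcost_cat.
have : e / 2 + e / 2 = e by rewrite -splitr.
rewrite /pnorm; lra.
Qed.

Lemma pnormZ_le (r : R) x : 0 < r -> tspace x -> pnorm (r *: x) <= r * pnorm x.
Proof.
move=> r0 Tx; rewrite -ler_pdivrMl //.
apply: lb_le_inf; first exact: (proj1 (rep_costs_inf Tx)).
move=> _ [t [<- ->]]; rewrite ler_pdivrMl //.
have := pnorm_le (tscale r%:C t).
by rewrite tembed_scale_real rcost_scale ger0_norm ?ler0c ?(ltW r0).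
Qed.

Lemma pnormZ (r : R) x : 0 < r -> tspace x -> pnorm (r *: x) = r * pnorm x.
Proof.
move=> r0 Tx; apply/le_anti/andP; split; first exact: pnormZ_le.
have ri0 : 0 < r^-1 by rewrite invr_gt0.
have := pnormZ_le ri0 (tspaceZ r Tx); rewrite scalerA mulVf ?gt_eqF // scale1r.
by rewrite -ler_pdivlMl // mulrC.
Qed.

(* The slack + 1 only serves to make the constant positive. *)
Let lamR := cn * l + 1.
Let lamR_gt0 : 0 < lamR.
Proof. by apply: ltr_wpDl ltr01; apply: mulr_ge0 => //; apply: le_trans l_ge1. Qed.

Definition sublin x := lamR * pnorm x.

Lemma sublinD x y : tspace x -> tspace y -> sublin (x + y) <= sublin x + sublin y.
Proof.
by move=> Tx Ty; rewrite /sublin -mulrDr; apply: ler_wpM2l; [exact: ltW|exact: pnormD].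
Qed.

Lemma sublinZ (r : R) x : 0 < r -> tspace x -> sublin (r *: x) = r * sublin x.
Proof. by move=> r0 Tx; rewrite /sublin pnormZ // mulrCA. Qed.

Definition Dgraph := [set xy : (bilform -> R) * R | exists z,
  in_tensor setT I z /\ xy = (tembed z, Re (teval D z))].

Lemma Dgraph0 : Dgraph (0, 0).
Proof.
exists (tempty A); split; first exact: in_tensor_empty.
by rewrite tembed_empty teval_empty.
Qed.

Lemma Dgraph_functional x y y' : Dgraph (x, y) -> Dgraph (x, y') -> y = y'.
Proof.
have le z z' : in_tensor setT I z -> in_tensor setT I z' -> tembed z = tembed z' ->
    Re (teval D z) <= Re (teval D z').
  move=> hz hz' e; set w := tcat z (tscale (-1) z').
  have hw : in_tensor setT I w by apply: in_tensor_cat => //; apply: in_tensor_scale.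
  have := @Re_tevalD_le_proj w (tempty A) hw.
  rewrite /rcost tcost_empty mulr0 teval_cat (teval_scale _ DI) //.
  rewrite ReD mulN1r ReN subr_le0; apply => B hB.
  rewrite teval_empty teval_cat (teval_scale _ hB) // (tembed_tensor_eq e hB).
  by rewrite mulN1r subrr.
move=> [z [hz [-> ->]]] [z' [hz' [ez ->]]].
by apply/le_anti; rewrite (le _ _ hz hz' ez) (le _ _ hz' hz (esym ez)).
Qed.

Lemma Dgraph_dominated_linear : dominated_linear_graph tspace sublin Dgraph.
Proof.
split; [exact: Dgraph_functional| | |].
- move=> x y x' y' [z [hz [-> ->]]] [z' [hz' [-> ->]]].
  exists (tcat z z'); split; first exact: in_tensor_cat.
  by rewrite tembed_cat teval_cat ReD.
- move=> r x y [z [hz [-> ->]]].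
  exists (tscale r%:C z); split; first exact: in_tensor_scale.
  by rewrite tembed_scale_real (teval_scale _ DI) // ReMr.
- move=> x y [z [hz [-> ->]]]; split; first exact: tembed_tspace.
  rewrite /sublin -ler_pdivrMl //.
  apply: lb_le_inf; first exact: (proj1 (rep_costs_inf (tembed_tspace z))).
  move=> _ [t [tz ->]]; rewrite ler_pdivrMl //.
  have := Re_tevalD_le_proj hz (tembed_tensor_eq tz).
  have : cn * l * rcost t <= lamR * rcost t.
    by rewrite /lamR mulrDl mul1r lerDl rcost_ge0.
  lra.
Qed.

Section Complexification.
Variable U : (bilform -> R) -> R.
Hypotheses (UD : forall x y, tspace x -> tspace y -> U (x + y) = U x + U y)
  (UZ : forall (r : R) x, tspace x -> U (r *: x) = r * U x)
  (Ule : forall x, tspace x -> U x <= sublin x)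
  (UDgraph : forall x y, Dgraph (x, y) -> U x = y).

(* The complex-linear functional whose real part is U. *)
Definition cU t := U (tembed t) +i* - U (tembed (tscale 'i t)).

Lemma U_scale k t :
  U (tembed (tscale k t)) = Re k * U (tembed t) + Im k * U (tembed (tscale 'i t)).
Proof.
by rewrite tembed_scale UD ?UZ //; try apply: tspaceZ; apply: tembed_tspace.
Qed.

Lemma cU_scale k t : cU (tscale k t) = k * cU t.
Proof.
apply: complex_ext; rewrite /cU /=; first by rewrite U_scale ReMc /=; lra.
by rewrite tembed_scaleM U_scale ReMc !ImMc /= !mul0r !mul1r; lra.
Qed.

Lemma cU_cat t s : cU (tcat t s) = cU t + cU s.
Proof.
apply: complex_ext; rewrite /cU /=; first by rewrite tembed_cat UD //; apply: tembed_tspace.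
by rewrite tembed_scale_cat UD ?opprD //; apply: tembed_tspace.
Qed.

Lemma cU_tensor_eq t s : tensor_eq setT t s -> cU t = cU s.
Proof.
move=> ets; rewrite /cU (tensor_eq_tembed ets).
rewrite (@tensor_eq_tembed (tscale 'i t) (tscale 'i s)) // => B hB.
by rewrite !(teval_scale _ hB) // ets.
Qed.

Lemma cU_bilinear : bilinear_on setT (fun b c => cU (tsingle b c)).
Proof.
split=> [k x y z _|k x y z _ _]; rewrite -cU_scale -cU_cat;
  apply: cU_tensor_eq => B [hB1 hB2];
  by rewrite teval_cat (teval_scale _ (conj hB1 hB2)) // !teval_single ?hB1 ?hB2.
Qed.

Lemma cU_bound b c : `|cU (tsingle b c)| <= (2 * lamR)%:C * `|b| * `|c|.
Proof.
set s := tsingle b c.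
have Ub k : U (tembed (tscale k s)) <= lamR * (Re `|k| * rcost s).
  apply: le_trans (Ule (tembed_tspace _)) _.
  rewrite /sublin -rcost_scale; apply: ler_wpM2l; [exact: ltW|exact: pnorm_le].
have hu : `|U (tembed s)| <= lamR * rcost s.
  rewrite ler_norml; apply/andP; split.
    by have := Ub (-1); rewrite U_scale normrN normr1 ReN ImN /= mul1r; lra.
  by have := Ub 1; rewrite U_scale normr1 /= mul1r; lra.
have hv : `|U (tembed (tscale 'i s))| <= lamR * rcost s.
  rewrite ler_norml; apply/andP; split.
    by have := Ub (- 'i); rewrite U_scale normrN Re_normc_i ReN ImN /= mul1r; lra.
  by have := Ub 'i; rewrite U_scale Re_normc_i /= mul1r; lra.
rewrite (normc_real (cU s)) -mulrA -tcost_single -/s rcost_real -rmorphM lecR.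
by apply: le_trans (Re_normc_le _ _) _; rewrite normrN; lra.
Qed.

Lemma cU_extends b j : I j -> cU (tsingle b j) = D b j.
Proof.
move=> Ij; have hs : in_tensor setT I (tsingle b j) by [].
have h1 := UDgraph (ex_intro _ _ (conj hs erefl)).
have h2 := UDgraph (ex_intro _ _ (conj (in_tensor_scale (k := 'i) hs) erefl)).
rewrite /cU h1 h2 (teval_scale _ DI) // !teval_single ReMc /= mul0r mul1r sub0r opprK.
by case: (D b j).
Qed.

End Complexification.

Lemma bilinear_extension :
  exists P, bounded_bilinear P /\ forall b j, I j -> P b j = D b j.
Proof.
have [U [UD UZ Ule UDgraph]] := hahn_banach_graph tspaceD tspaceZ sublinD sublinZ
  Dgraph0 Dgraph_dominated_linear.
exists (fun b c => cU U (tsingle b c)); split; last exact: cU_extends.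
by split; [exact: cU_bilinear|exists (2 * lamR)%:C; exact: cU_bound].
Qed.

End Extension.

Section BoundedBilinear.
Variables (K : numFieldType) (V : normedModType K) (mul : V -> V -> V).
Hypothesis hBA : banach_algebra mul.
Implicit Types B : V -> V -> K.

Lemma bounded_bilinear_nonneg B : bounded_bilinear B ->
  exists M : K, 0 <= M /\ forall b c, `|B b c| <= M * `|b| * `|c|.
Proof.
move=> [_ [M hM]]; exists `|M|; split => // b c.
by rewrite -mulrA; apply: ler_norm_absM; [apply: mulr_ge0|rewrite mulrA].
Qed.

Lemma bounded_bilinear_mulr a B : bounded_bilinear B ->
  bounded_bilinear (fun b c => B b (mul c a)).
Proof.
move=> hB; have [M [M0 hM]] := bounded_bilinear_nonneg hB; have [[h1 h2] _] := hB.
split; first split.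
- by move=> k x y z _; rewrite h1.
- by move=> k x y z _ _; rewrite (ba_mulDl hBA) (ba_mulZl hBA) h2.
- exists (M * `|a|) => b c; apply: le_trans (hM _ _) _.
  rewrite -!mulrA; apply: ler_wpM2l => //; rewrite mulrCA; apply: ler_wpM2l => //.
  by rewrite mulrC; apply: (ba_norm_mul hBA).
Qed.

Lemma bounded_bilinear_mull a B : bounded_bilinear B ->
  bounded_bilinear (fun b c => B (mul a b) c).
Proof.
move=> hB; have [M [M0 hM]] := bounded_bilinear_nonneg hB; have [[h1 h2] _] := hB.
split; first split.
- by move=> k x y z _; rewrite (ba_mulDr hBA) (ba_mulZr hBA) h1.
- by move=> k x y z _ _; rewrite h2.
- exists (M * `|a|) => b c; apply: le_trans (hM _ _) _.
  apply: ler_wpM2r => //; rewrite -mulrA; apply: ler_wpM2l => //.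
  exact: (ba_norm_mul hBA).
Qed.

Lemma bounded_bilinear_comb (k : K) B1 B2 : bounded_bilinear B1 ->
  bounded_bilinear B2 -> bounded_bilinear (fun b c => k * B1 b c + B2 b c).
Proof.
move=> hB1 hB2.
have [M1 [M10 hM1]] := bounded_bilinear_nonneg hB1.
have [M2 [M20 hM2]] := bounded_bilinear_nonneg hB2.
have [[h1 h2] _] := hB1; have [[h1' h2'] _] := hB2.
split; first split.
- move=> k' x y z _; rewrite h1 // h1' //.
  by rewrite mulrDr mulrCA !addrA (addrAC (k' * (k * _))) mulrDr.
- move=> k' x y z _ _; rewrite h2 // h2' //.
  by rewrite mulrDr mulrCA !addrA (addrAC (k' * (k * _))) mulrDr.
- exists (`|k| * M1 + M2) => b c; apply: le_trans (ler_normD _ _) _.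
  rewrite !mulrDl; apply: lerD => //.
  by rewrite normrM -!mulrA; apply: ler_wpM2l => //; rewrite !mulrA.
Qed.

End BoundedBilinear.

Section EssentialIdeal.
Variables (K : numFieldType) (V : normedModType K) (mul : V -> V -> V) (I : set V).
Hypothesis hI : closed_ideal mul I.

Lemma span_products_sub : span_products mul I `<=` I.
Proof.
move=> _ [n [k [a [i [hi ->]]]]].
apply: (big_ind I); [exact: (ci_0 hI)|exact: (ci_D hI)|].
by move=> j _; apply: (ci_Z hI); apply: (ci_mull hI).
Qed.

Lemma dual_on0 d : dual_on I d -> d 0 = 0.
Proof.
move=> [dlin _]; have := dlin 1 0 0 (ci_0 hI) (ci_0 hI).
rewrite scale1r addr0 mul1r => h.
by apply: (addrI (d 0)); rewrite addr0 -h.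
Qed.

Lemma dual_on_span_eq0 d : dual_on I d -> (forall y j, I j -> d (mul y j) = 0) ->
  forall s, span_products mul I s -> d s = 0.
Proof.
move=> hd dprod _ [n [k [a [i [hi ->]]]]]; have [dlin _] := hd.
suff [] : I (\sum_(j < n) k j *: mul (a j) (i j)) /\
          d (\sum_(j < n) k j *: mul (a j) (i j)) = 0 by [].
apply: (big_ind (fun w => I w /\ d w = 0)).
- by split; [exact: (ci_0 hI)|exact: dual_on0].
- move=> x y [Ix dx] [Iy dy]; split; first exact: (ci_D hI).
  by have := dlin 1 x y Ix Iy; rewrite scale1r mul1r dx dy addr0.
- move=> j _; have Ij : I (mul (a j) (i j)) by apply: (ci_mull hI).
  split; first exact: (ci_Z hI).
  have := dlin (k j) _ 0 Ij (ci_0 hI).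
  by rewrite addr0 dprod // (dual_on0 hd) mulr0 addr0.
Qed.

Lemma dual_on_closure_eq0 d : dual_on I d ->
  (forall s, span_products mul I s -> d s = 0) ->
  forall x, I x -> closure (span_products mul I) x -> d x = 0.
Proof.
move=> [dlin [M dM]] ds x Ix clx.
have dM' y : I y -> `|d y| <= `|M| * `|y|.
  by move=> Iy; apply: ler_norm_absM => //; apply: dM.
apply/eqP; rewrite -normr_le0; apply/ler_addgt0Pr => e e0; rewrite add0r.
have M1 : 0 < `|M| + 1 by apply: ltr_wpDl ltr01.
have de0 : 0 < e / (`|M| + 1) by apply: divr_gt0.
have [s [Ss xs]] := clx _ (nbhsx_ballx x _ de0).
move: xs; rewrite -ball_normE /= => xs.
have Is := span_products_sub Ss.
have Ixs : I (x - s) by apply: (ci_D hI) => //; rewrite -scaleN1r; apply: (ci_Z hI).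
have -> : d x = d (x - s).
  by have := dlin 1 (x - s) s Ixs Is; rewrite scale1r mul1r subrK (ds s Ss) addr0.
apply: le_trans (dM' _ Ixs) _.
apply: le_trans (ler_wpM2l (normr_ge0 M) (ltW xs)) _.
by rewrite mulrA ler_pdivrMr // mulrDr mulr1 mulrC lerDl ltW.
Qed.

Lemma left_essential_dual_eq0 d : left_essential mul I -> dual_on I d ->
  (forall y j, I j -> d (mul y j) = 0) -> forall x, I x -> d x = 0.
Proof.
move=> hess hd dprod x Ix.
by apply: dual_on_closure_eq0 (hess x Ix) => //; apply: dual_on_span_eq0.
Qed.

End EssentialIdeal.

Section InnerDerivation.
Variables (K : numFieldType) (V : normedModType K) (mul : V -> V -> V) (I : set V).
Hypotheses (hBA : banach_algebra mul) (hI : closed_ideal mul I)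
  (hess : left_essential mul I).
Variable rho : (V -> V -> K) -> V -> K.
Hypotheses
  (rho_bd : forall B, bounded_bilinear B -> bounded_functional (rho B))
  (rho_lin : forall (k : K) B1 B2, bounded_bilinear B1 -> bounded_bilinear B2 ->
    rho (fun b c => k * B1 b c + B2 b c) = (fun x => k * rho B1 x + rho B2 x))
  (rho_id : forall f, bounded_functional f -> rho (fun b c => f (mul b c)) = f)
  (rho_mod : forall a B, bounded_bilinear B ->
    rho (fun b c => B b (mul c a)) = (fun x => rho B (mul x a)) /\
    rho (fun b c => B (mul a b) c) = (fun x => rho B (mul a x))).
Variable D : V -> V -> K.
Hypothesis hD : derivation_into_dual mul I D.
Variable P : V -> V -> K.
Hypotheses (hP : bounded_bilinear P) (PD : forall b j, I j -> P b j = D b j).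

Let Dbound : exists c : K, 0 <= c /\ forall a x, I x -> `|D a x| <= c * `|a| * `|x|.
Proof.
have [_ _ [c hc] _] := hD; exists `|c|; split => // a x Ix.
by rewrite -mulrA; apply: ler_norm_absM; [apply: mulr_ge0|rewrite mulrA; apply: hc].
Qed.

Lemma derivation_slice_bounded a j : I j -> bounded_functional (fun w => D a (mul w j)).
Proof.
move=> Ij; have [hDl1 _ _ _] := hD; have [c [c0 hc]] := Dbound.
split=> [k x y|].
  by rewrite (ba_mulDl hBA) (ba_mulZl hBA) hDl1 //; apply: (ci_mull hI).
exists (c * `|a| * `|j|) => w; apply: le_trans (hc _ _ (ci_mull hI w Ij)) _.
rewrite -!mulrA; apply: ler_wpM2l => //; apply: ler_wpM2l => //.
by rewrite mulrC; apply: (ba_norm_mul hBA).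
Qed.

Definition Pcomm a := fun b c => -1 * P b (mul c a) + P (mul a b) c.

Lemma bounded_bilinear_Pcomm a : bounded_bilinear (Pcomm a).
Proof.
exact: bounded_bilinear_comb (bounded_bilinear_mulr hBA a hP)
  (bounded_bilinear_mull hBA a hP).
Qed.

Lemma rho_Pcomm a y : rho (Pcomm a) y = - rho P (mul y a) + rho P (mul a y).
Proof.
rewrite /Pcomm (rho_lin _ (bounded_bilinear_mulr hBA a hP)
  (bounded_bilinear_mull hBA a hP)).
by have [-> ->] := rho_mod a hP; rewrite mulN1r.
Qed.

Lemma Pcomm_product a j b c : I j -> Pcomm a b (mul c j) = D a (mul (mul b c) j).
Proof.
move=> Ij; have [_ _ _ Dder] := hD.
have Icj : I (mul c j) by apply: (ci_mull hI).
have Icja : I (mul (mul c j) a) by apply: (ci_mulr hI).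
by rewrite /Pcomm !PD // Dder // mulN1r addrA addNr add0r (ba_mulA hBA).
Qed.

Lemma rho_Pcomm_product a y j : I j -> rho (Pcomm a) (mul y j) = D a (mul y j).
Proof.
move=> Ij; have [rhoj _] := rho_mod j (bounded_bilinear_Pcomm a).
have -> : rho (Pcomm a) (mul y j) = rho (fun b c => Pcomm a b (mul c j)) y.
  by rewrite rhoj.
have -> : (fun b c => Pcomm a b (mul c j)) = (fun b c => D a (mul (mul b c) j)).
  by apply: funext => b; apply: funext => c; apply: Pcomm_product.
by rewrite (rho_id (derivation_slice_bounded a Ij)).
Qed.

Definition residual a y := D a y - rho (Pcomm a) y.

Lemma residual_dual_on a : dual_on I (residual a).
Proof.
have [hDl1 _ _ _] := hD; have [c [c0 hc]] := Dbound.
have [Hlin [MH hMH]] := rho_bd (bounded_bilinear_Pcomm a).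
split=> [k y z Iy Iz|].
  by rewrite /residual hDl1 // Hlin mulrBr opprD !addrA (addrAC (k * D a y)).
exists (c * `|a| + MH) => y Iy; apply: le_trans (ler_normB _ _) _.
by rewrite mulrDl; apply: lerD; [apply: hc|apply: hMH].
Qed.

Lemma residual_product a y j : I j -> residual a (mul y j) = 0.
Proof. by move=> Ij; rewrite /residual rho_Pcomm_product // subrr. Qed.

Lemma derivation_inner : exists f, dual_on I f /\
  forall a x, I x -> D a x = f (mul x a) - f (mul a x).
Proof.
have [Plin [MP hMP]] := rho_bd hP.
exists (fun x => - rho P x); split.
  split; first by move=> k x y _ _; rewrite Plin opprD mulrN.
  by exists MP => x _; rewrite normrN; apply: hMP.
move=> a x Ix; rewrite opprK -rho_Pcomm; apply/eqP; rewrite -subr_eq0; apply/eqP.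
exact: (left_essential_dual_eq0 hI hess (residual_dual_on a) (@residual_product a)).
Qed.

End InnerDerivation.

Theorem theorem4p1 (R : realType) (A : completeNormedModType R[i])
    (mul : A -> A -> A) (I : set A) :
  banach_algebra mul -> biflat mul -> closed_ideal mul I ->
  left_essential mul I -> respects_iso I ->
  H1_dual_trivial mul I.
Proof.
move=> hBA [rho [rho_bd rho_lin _ rho_id rho_mod]] hI hess [lam [lam1 hlam]] D hD.
have [hDl1 hDl2 [CD hCD] _] := hD.
have DI : bilinear_on I D by split=> [k x y z Iz|k x y z Iy Iz]; [apply: hDl2|apply: hDl1].
have [P [hP PD]] := bilinear_extension lam1 hlam DI hCD.
exact: (derivation_inner hBA hI hess rho_bd rho_lin rho_id rho_mod hD hP PD).
Qed.
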